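(* Let $R$ be a commutative ring such that there exists a derivation $\partial\in\mathrm{Der}(R)$ with $r\partial\neq0$ for all nonzero $r\in R$. Then the group homomorphism $\mathrm{Aut}(R)\to\mathrm{Aut}_{\mathrm{Lie}}(\mathrm{Der}(R))$, $\sigma\mapsto(\delta\mapsto\sigma\delta\sigma^{-1})$, is a monomorphism.
   Context: $\mathrm{Aut}(R)$ is the group of ring automorphisms of $R$, $\mathrm{Der}(R)$ is the Lie algebra of derivations of $R$ with bracket $[\delta,\delta']=\delta\delta'-\delta'\delta$, and $r\partial$ denotes the derivation $a\mapsto r\partial(a)$. *)

From mathcomp Require Import all_boot all_algebra.
Set Implicit Arguments. Unset Strict Implicit. Unset Printing Implicit Defensive.
Import GRing.Theory.
Local Open Scope ring_scope.

Definition is_derivation (R : comPzRingType) (d : R -> R) : Prop :=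
  (forall a b : R, d (a + b) = d a + d b) /\
  (forall a b : R, d (a * b) = a * d b + d a * b).

Definition is_ring_aut (R : comPzRingType) (s : R -> R) : Prop :=
  [/\ forall a b : R, s (a + b) = s a + s b,
      forall a b : R, s (a * b) = s a * s b,
      s 1 = 1
    & bijective s].

From mathcomp Require Import all_boot all_algebra.
From mathcomp Require Import ring.
Local Open Scope ring_scope.
Import GRing.Theory.
Set Implicit Arguments. Unset Strict Implicit.

(* If s1 and s2 induce the same conjugation on Der(R), then tau := s2^-1 s1 is a
   ring automorphism commuting with every derivation.  Applying this to r*d for a
   derivation d gives tau r * d (tau b) = r * d (tau b), i.e. (tau r - r) d = 0 on
   the image of tau, which is all of R; faithfulness of d forces tau r = r. *)

Lemma derivation_mull (R : comPzRingType) (d : R -> R) (r : R) :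
  is_derivation d -> is_derivation (fun a => r * d a).
Proof.
case=> dD dM; split=> a b; first by rewrite dD mulrDr.
by rewrite dM; ring.
Qed.

Lemma can_morph_mul (R : comPzRingType) (s t : R -> R) :
  {morph s : a b / a * b} -> cancel s t -> cancel t s -> {morph t : a b / a * b}.
Proof. by move=> sM sK tK a b; apply: (can_inj sK); rewrite sM !tK. Qed.

Lemma commute_derivations_id (R : comPzRingType) (tau : R -> R) (d : R -> R) :
  is_derivation d -> (forall r, r != 0 -> ~ (forall a, r * d a = 0)) ->
  {morph tau : a b / a * b} -> (forall c, exists b, tau b = c) ->
  (forall delta, is_derivation delta -> forall b, tau (delta b) = delta (tau b)) ->
  tau =1 id.
Proof.
move=> dder dfaithful tauM tau_surj tau_comm r /=.
apply/eqP; rewrite -subr_eq0; apply/negPn/negP => Hne.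
apply: (dfaithful _ Hne) => c; have [b <-] := tau_surj c.
have := tau_comm _ (derivation_mull r dder) b.
by rewrite tauM (tau_comm _ dder) mulrBl => ->; rewrite subrr.
Qed.

Theorem lemma2p2 (R : comPzRingType)
  (Hpart : exists d : R -> R, is_derivation d /\
             forall r : R, r != 0 -> ~ (forall a : R, r * d a = 0))
  (s1 t1 s2 t2 : R -> R)
  (Hs1 : is_ring_aut s1) (Hs1K : cancel s1 t1) (Ht1K : cancel t1 s1)
  (Hs2 : is_ring_aut s2) (Hs2K : cancel s2 t2) (Ht2K : cancel t2 s2)
  (Hconj : forall delta : R -> R, is_derivation delta ->
             (fun a => s1 (delta (t1 a))) =1 (fun a => s2 (delta (t2 a)))) :
  s1 =1 s2.
Proof.
have [d [dder dfaithful]] := Hpart.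
have [_ s1M _ _] := Hs1; have [_ s2M _ _] := Hs2.
pose tau a := t2 (s1 a).
have tauM a b : tau (a * b) = tau a * tau b.
  by rewrite /tau s1M (can_morph_mul s2M Hs2K Ht2K).
have tau_surj c : exists b, tau b = c by exists (t1 (s2 c)); rewrite /tau Ht1K Hs2K.
have tau_comm delta : is_derivation delta -> forall b, tau (delta b) = delta (tau b).
  by move=> Hd b; have := Hconj _ Hd (s1 b); rewrite /= Hs1K /tau => ->; rewrite Hs2K.
have tau_id := commute_derivations_id dder dfaithful tauM tau_surj tau_comm.
by move=> a; rewrite -[in RHS](tau_id a) /tau Ht2K.
Qed.
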